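(* Each of the graphs $K_{3,3,3}$, $K_{2,4,4}$, $K_{2,3,5}$, $K_{2,2,9}$, $K_{1,2,2,2}$, $K_{1,1,2,3}$, $K_{1,1,1,2,2}$, $K_{1*4,6}$, $K_{1*5,5}$ and $K_{1*6,4}$ is uniquely $3$-list colorable.
   Context: All graphs are finite, simple and undirected. A list assignment $L$ for a graph $G$ assigns to each vertex $v$ a set $L(v)$ of colors; an $L$-coloring is a proper vertex coloring $c$ of $G$ with $c(v)\in L(v)$ for every vertex $v$. A $k$-list assignment is a list assignment with $|L(v)|=k$ for all $v$. $G$ is uniquely $k$-list colorable (U$k$LC) if there exists a $k$-list assignment $L$ such that $G$ has exactly one $L$-coloring. $K_{n_1,\dots,n_r}$ denotes the complete $r$-partite graph with parts of sizes $n_1,\dots,n_r$. $K_{1*r,s}$ denotes the complete $(r+1)$-partite graph with $r$ parts of size $1$ and one part of size $s$. *)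

From mathcomp Require Import all_boot.
Set Implicit Arguments. Unset Strict Implicit. Unset Printing Implicit Defensive.

(* Colors are natural numbers (any finite lists of colors can be relabelled into nat). *)

Definition is_k_list_assignment (T : finType) (k : nat) (L : T -> seq nat) : Prop :=
  forall v, uniq (L v) /\ size (L v) = k.

Definition is_L_coloring (T : finType) (adj : rel T) (L : T -> seq nat)
    (c : T -> nat) : Prop :=
  (forall v, c v \in L v) /\ (forall u v, adj u v -> c u <> c v).

Definition uniquely_k_list_colorable (T : finType) (adj : rel T) (k : nat) : Prop :=
  exists L : T -> seq nat,
    is_k_list_assignment k L /\
    exists c, is_L_coloring adj L c /\
      forall c', is_L_coloring adj L c' -> forall v, c' v = c v.

(* Complete multipartite graph K_{n_1,...,n_r} with part sizes s = [:: n_1; ...; n_r]: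
   a vertex is a pair (part index i, index within part i); two vertices are adjacent
   iff they lie in different parts. *)
Definition cmp_vertex (s : seq nat) : finType :=
  {i : 'I_(size s) & 'I_(nth 0 s i)}.

Definition cmp_adj (s : seq nat) : rel (cmp_vertex s) :=
  fun u v => tag u != tag v.

Definition UkLC_multipartite (k : nat) (s : seq nat) : Prop :=
  uniquely_k_list_colorable (@cmp_adj s) k.

Definition K1star (r t : nat) : seq nat := rcons (nseq r 1) t.

From mathcomp Require Import all_boot.
Set Implicit Arguments. Unset Strict Implicit. Unset Printing Implicit Defensive.

(* Each graph comes with an explicit 3-list assignment L and an L-coloring c.
   Uniqueness of c is certified by an exhaustive backtracking search over the
   L-colorings, which colors the vertices one at a time and abandons a branch
   as soon as a color clashes with an adjacent vertex colored earlier; every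
   complete branch must reproduce c.  The search is proved sound once and for
   all, and each instance is then decided by evaluation. *)

Section ColoringSearch.

Variables (V : eqType) (adj : rel V) (L : V -> seq nat) (c : V -> nat).

(* [acc] is the partial coloring built so far, most recent vertex first.  The
   [if] (rather than [||]) makes [vm_compute], which is call-by-value, prune
   the branches that clash. *)
Fixpoint all_extensions_agree (vs : seq V) (acc : seq (V * nat)) : bool :=
  match vs with
  | [::] => all (fun a => a.2 == c a.1) acc
  | v :: vs' =>
      all (fun col => if has (fun a => adj a.1 v && (a.2 == col)) acc then true
                      else all_extensions_agree vs' ((v, col) :: acc)) (L v)
  end.

Lemma all_extensions_agree_sound (c' : V -> nat) vs acc :
  {in vs, forall v, c' v \in L v} ->
  {in vs ++ map fst acc &, forall u v, adj u v -> c' u <> c' v} ->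
  all_extensions_agree vs acc -> {in acc, forall a, a.2 = c' a.1} ->
  {in vs ++ map fst acc, forall v, c' v = c v}.
Proof.
elim: vs acc => [|v vs IHvs] acc /= c'L c'proper.
  move=> /allP agree c'acc _ /mapP[a acc_a ->].
  by rewrite -c'acc //; apply/eqP/agree.
have mem_shift col : vs ++ map fst ((v, col) :: acc) =i v :: vs ++ map fst acc.
  by move=> u; rewrite /= !(inE, mem_cat) orbCA.
move=> /allP/(_ _ (c'L v (mem_head v vs))).
case: hasP => [[a acc_a /andP[adj_av /eqP a_col]] _ | _ search] c'acc.
  case: (c'proper _ _ _ (mem_head _ _) adj_av); last by rewrite -c'acc.
  by rewrite inE mem_cat (map_f fst acc_a) !orbT.
move=> u; rewrite -(mem_shift (c' v)); apply: (IHvs _ _ _ search).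
- by move=> w w_in; apply: c'L; rewrite inE w_in orbT.
- by move=> w w'; rewrite !mem_shift; apply: c'proper.
- by move=> a; rewrite inE => /orP[/eqP-> // | /c'acc].
Qed.

End ColoringSearch.

Definition unique_coloring_certificate (V : eqType) (adj : rel V) (k : nat)
    (L : V -> seq nat) (c : V -> nat) (vs : seq V) : bool :=
  [&& all (fun v => uniq (L v) && (size (L v) == k)) vs,
      all (fun v => c v \in L v) vs,
      all (fun u => all (fun v => adj u v ==> (c u != c v)) vs) vs
    & all_extensions_agree adj L c vs [::]].

(* The certificate lives on codes [f v] of the vertices: [vm_compute] on terms
   of a type like [cmp_vertex s] would also evaluate its canonical finType
   structures, which is prohibitively slow. *)
Lemma certificate_uniquely_k_list_colorable (T : finType) (V : eqType)
    (adjT : rel T) (f : T -> V) (adj : rel V) k L c vs :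
  injective f -> {mono f : u v / adjT u v >-> adj u v} -> vs =i codom f ->
  unique_coloring_certificate adj k L c vs ->
  uniquely_k_list_colorable adjT k.
Proof.
move=> f_inj f_adj vs_f /and4P[/allP L_ok /allP cL /allP c_proper search].
have f_vs v : f v \in vs by rewrite vs_f codom_f.
exists (L \o f); split=> [v | ]; first by case/andP: (L_ok _ (f_vs v)) => -> /eqP.
exists (c \o f); split=> [ | c' [c'L c'proper] v].
  split=> [v | u v adj_uv]; first exact: cL.
  apply/eqP; move/allP: (c_proper _ (f_vs u)) => /(_ _ (f_vs v)).
  by rewrite f_adj adj_uv.
pose c'V x := odflt 0 (omap c' [pick u | f u == x]).
have c'Vf u : c'V (f u) = c' u.
  by rewrite /c'V; case: pickP => [u' /eqP/f_inj -> // | /(_ u)]; rewrite eqxx.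
have vs_codom x : x \in vs -> exists u, x = f u.
  by rewrite vs_f => /codomP.
rewrite -c'Vf; apply: (all_extensions_agree_sound (c' := c'V) _ _ search).
- by move=> x /vs_codom[u ->]; rewrite c'Vf; apply: c'L.
- move=> x y; rewrite cats0 => /vs_codom[u ->] /vs_codom[w ->].
  by rewrite !c'Vf f_adj; apply: c'proper.
- by [].
- by rewrite cats0.
Qed.

Definition cmp_code (s : seq nat) (v : cmp_vertex s) : nat * nat :=
  (val (tag v), val (tagged v)).

Definition cmp_codes (s : seq nat) : seq (nat * nat) :=
  [seq (i, j) | i <- iota 0 (size s), j <- iota 0 (nth 0 s i)].

Lemma cmp_code_inj s : injective (@cmp_code s).
Proof. by case=> i j [i' j'] [/val_inj eq_i]; subst i' => /val_inj->. Qed.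

Lemma cmp_adj_code s :
  {mono @cmp_code s : u v / cmp_adj u v >-> u.1 != v.1}.
Proof. by move=> u v; rewrite /cmp_adj val_eqE. Qed.

Lemma cmp_codesE s : cmp_codes s =i codom (@cmp_code s).
Proof.
move=> p; apply/allpairsPdep/codomP => [[i [j [i_lt j_lt ->]]] | [[i j] ->]].
  rewrite !mem_iota /= !add0n in i_lt j_lt.
  pose i' : 'I_(size s) := Ordinal i_lt; pose j' : 'I_(nth 0 s i') := Ordinal j_lt.
  by exists (Tagged (fun i : 'I_(size s) => 'I_(nth 0 s i)) j').
by exists (val i), (val j); rewrite !mem_iota /= !ltn_ord.
Qed.

Definition part_table (A : Type) (x0 : A) (t : seq (seq A)) (p : nat * nat) : A :=
  nth x0 (nth [::] t p.1) p.2.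

Lemma multipartite_certificate_UkLC k s
    (lists : seq (seq (seq nat))) (colors : seq (seq nat)) :
  unique_coloring_certificate (fun p q : nat * nat => p.1 != q.1) k
    (part_table [::] lists) (part_table 0 colors) (cmp_codes s) ->
  UkLC_multipartite k s.
Proof.
exact: certificate_uniquely_k_list_colorable
  (@cmp_code_inj s) (@cmp_adj_code s) (@cmp_codesE s).
Qed.

Lemma UkLC_K333 : UkLC_multipartite 3 [:: 3; 3; 3].
Proof.
apply: (@multipartite_certificate_UkLC _ _
  [:: [:: [:: 0; 4; 2]; [:: 5; 4; 1]; [:: 3; 1; 0]];
      [:: [:: 4; 0; 5]; [:: 1; 4; 0]; [:: 2; 1; 5]];
      [:: [:: 3; 0; 4]; [:: 4; 1; 5]; [:: 2; 1; 0]]]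
  [:: [:: 0; 5; 0]; [:: 4; 4; 2]; [:: 3; 1; 1]]).
by vm_compute.
Qed.

Lemma UkLC_K244 : UkLC_multipartite 3 [:: 2; 4; 4].
Proof.
apply: (@multipartite_certificate_UkLC _ _
  [:: [:: [:: 1; 3; 0]; [:: 5; 4; 2]];
      [:: [:: 5; 3; 1]; [:: 3; 0; 2]; [:: 4; 3; 2]; [:: 0; 4; 1]];
      [:: [:: 3; 4; 0]; [:: 1; 5; 2]; [:: 3; 0; 1]; [:: 1; 4; 3]]]
  [:: [:: 0; 4]; [:: 1; 2; 2; 1]; [:: 3; 5; 3; 3]]).
by vm_compute.
Qed.

Lemma UkLC_K235 : UkLC_multipartite 3 [:: 2; 3; 5].
Proof.
apply: (@multipartite_certificate_UkLC _ _
  [:: [:: [:: 1; 0; 2]; [:: 5; 3; 4]];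
      [:: [:: 5; 4; 0]; [:: 1; 4; 3]; [:: 1; 0; 2]];
      [:: [:: 2; 0; 3]; [:: 2; 4; 1]; [:: 0; 2; 5]; [:: 5; 1; 0]; [:: 1; 0; 3]]]
  [:: [:: 2; 3]; [:: 5; 1; 1]; [:: 0; 4; 0; 0; 0]]).
by vm_compute.
Qed.

Lemma UkLC_K229 : UkLC_multipartite 3 [:: 2; 2; 9].
Proof.
apply: (@multipartite_certificate_UkLC _ _
  [:: [:: [:: 2; 3; 5]; [:: 0; 4; 2]];
      [:: [:: 0; 2; 5]; [:: 3; 4; 1]];
      [:: [:: 0; 1; 2]; [:: 1; 5; 2]; [:: 1; 4; 5]; [:: 0; 3; 1]; [:: 4; 5; 2];
          [:: 3; 4; 5]; [:: 2; 3; 5]; [:: 0; 2; 3]; [:: 2; 4; 0]]]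
  [:: [:: 3; 4]; [:: 2; 1]; [:: 0; 5; 5; 0; 5; 5; 5; 0; 0]]).
by vm_compute.
Qed.

Lemma UkLC_K1222 : UkLC_multipartite 3 [:: 1; 2; 2; 2].
Proof.
apply: (@multipartite_certificate_UkLC _ _
  [:: [:: [:: 3; 0; 2]];
      [:: [:: 3; 4; 5]; [:: 3; 0; 2]];
      [:: [:: 5; 0; 3]; [:: 0; 3; 4]];
      [:: [:: 0; 3; 4]; [:: 3; 0; 2]]]
  [:: [:: 2]; [:: 3; 3]; [:: 5; 4]; [:: 0; 0]]).
by vm_compute.
Qed.

Lemma UkLC_K1123 : UkLC_multipartite 3 [:: 1; 1; 2; 3].
Proof.
apply: (@multipartite_certificate_UkLC _ _
  [:: [:: [:: 0; 5; 4]];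
      [:: [:: 3; 4; 0]];
      [:: [:: 4; 0; 1]; [:: 3; 5; 4]];
      [:: [:: 4; 0; 5]; [:: 0; 4; 3]; [:: 3; 5; 1]]]
  [:: [:: 5]; [:: 3]; [:: 4; 4]; [:: 0; 0; 1]]).
by vm_compute.
Qed.

Lemma UkLC_K11122 : UkLC_multipartite 3 [:: 1; 1; 1; 2; 2].
Proof.
apply: (@multipartite_certificate_UkLC _ _
  [:: [:: [:: 0; 5; 1]];
      [:: [:: 1; 4; 5]];
      [:: [:: 5; 3; 1]];
      [:: [:: 5; 0; 3]; [:: 5; 4; 1]];
      [:: [:: 4; 1; 5]; [:: 0; 5; 4]]]
  [:: [:: 0]; [:: 1]; [:: 3]; [:: 5; 5]; [:: 4; 4]]).
by vm_compute.
Qed.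

Lemma UkLC_K1star_4_6 : UkLC_multipartite 3 (K1star 4 6).
Proof.
apply: (@multipartite_certificate_UkLC _ _
  [:: [:: [:: 2; 4; 5]];
      [:: [:: 2; 0; 3]];
      [:: [:: 3; 1; 2]];
      [:: [:: 0; 4; 3]];
      [:: [:: 1; 5; 3]; [:: 5; 4; 2]; [:: 4; 2; 3]; [:: 5; 0; 1]; [:: 4; 1; 0];
          [:: 3; 2; 0]]]
  [:: [:: 5]; [:: 0]; [:: 3]; [:: 4]; [:: 1; 2; 2; 1; 1; 2]]).
by vm_compute.
Qed.

Lemma UkLC_K1star_5_5 : UkLC_multipartite 3 (K1star 5 5).
Proof.
apply: (@multipartite_certificate_UkLC _ _
  [:: [:: [:: 5; 1; 3]];
      [:: [:: 2; 0; 6]];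
      [:: [:: 5; 0; 6]];
      [:: [:: 5; 4; 0]];
      [:: [:: 2; 6; 1]];
      [:: [:: 5; 0; 6]; [:: 3; 5; 1]; [:: 0; 2; 4]; [:: 6; 4; 2]; [:: 4; 6; 0]]]
  [:: [:: 3]; [:: 2]; [:: 6]; [:: 0]; [:: 1]; [:: 5; 5; 4; 4; 4]]).
by vm_compute.
Qed.

Lemma UkLC_K1star_6_4 : UkLC_multipartite 3 (K1star 6 4).
Proof.
apply: (@multipartite_certificate_UkLC _ _
  [:: [:: [:: 2; 7; 1]];
      [:: [:: 7; 4; 3]];
      [:: [:: 6; 0; 5]];
      [:: [:: 2; 6; 1]];
      [:: [:: 7; 0; 2]];
      [:: [:: 1; 3; 7]];
      [:: [:: 6; 3; 4]; [:: 7; 1; 2]; [:: 7; 6; 0]; [:: 0; 1; 5]]]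
  [:: [:: 7]; [:: 4]; [:: 5]; [:: 2]; [:: 0]; [:: 3]; [:: 6; 1; 6; 1]]).
by vm_compute.
Qed.

Theorem proposition3p3 :
  UkLC_multipartite 3 [:: 3; 3; 3] /\
  UkLC_multipartite 3 [:: 2; 4; 4] /\
  UkLC_multipartite 3 [:: 2; 3; 5] /\
  UkLC_multipartite 3 [:: 2; 2; 9] /\
  UkLC_multipartite 3 [:: 1; 2; 2; 2] /\
  UkLC_multipartite 3 [:: 1; 1; 2; 3] /\
  UkLC_multipartite 3 [:: 1; 1; 1; 2; 2] /\
  UkLC_multipartite 3 (K1star 4 6) /\
  UkLC_multipartite 3 (K1star 5 5) /\
  UkLC_multipartite 3 (K1star 6 4).
Proof.
split; first exact: UkLC_K333.
split; first exact: UkLC_K244.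
split; first exact: UkLC_K235.
split; first exact: UkLC_K229.
split; first exact: UkLC_K1222.
split; first exact: UkLC_K1123.
split; first exact: UkLC_K11122.
split; first exact: UkLC_K1star_4_6.
split; first exact: UkLC_K1star_5_5.
exact: UkLC_K1star_6_4.
Qed.
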